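(* Let $\ell, d, h \in \mathbb{N}$ and let $k$ be an odd positive integer, and set $R(d) = \lfloor k/2 \rfloor \cdot d$. Let $f: \mathbb{R}^{\ell} \to \mathbb{R}^{\ell}$ be a normalization-free one-dimensional convolutional neural network of depth $d$ with ReLU nonlinearity, i.e. $$\mathbf{z}^{(1)} = C_{in}(\mathbf{x}), \qquad \mathbf{z}^{(i)} = \sigma\big(C_i(\mathbf{z}^{(i-1)})\big) \ \ \forall i \in \{2,\dots,d\}, \qquad f(\mathbf{x}) = C_{out}\big(\mathbf{z}^{(d-1)}\big),$$ where $\sigma$ is the (elementwise) ReLU, and $C_{in}, C_i, C_{out}$ are arbitrary bias-enabled one-dimensional convolutional layers with kernel size $k$, zero-padding of width $\lfloor k/2 \rfloor$ on each side, unit stride and no dilation (so each maps length-$\ell$ sequences to length-$\ell$ sequences), with channel dimensions $1 \to h$ for $C_{in}$, $h \to h$ for each $C_i$, and $h \to 1$ for $C_{out}$. Assume $R(d) < \frac{\ell}{2} - 2$. Then $f$ does not localize any index $i^* \in \{R(d)+1, R(d)+2, \dots, \ell - R(d) - 1\}$, in the following sense: for every such $i^*$ there exists $j \in \{1,\dots,\ell\} \setminus \{i^*\}$ with $\mathbb{E}_{X \sim P_{f_{i^*}}}[X] = \mathbb{E}_{X \sim P_{f_j}}[X]$.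
   Context: For $f: \mathbb{R}^{\ell} \to \mathbb{R}^{\ell}$ and $i \in \{1,\dots,\ell\}$, $f_i: \mathbb{R}^{\ell} \to \mathbb{R}$ denotes the $i$-th output coordinate of $f$, and $P_{f_i}$ denotes the distribution of $f_i(\mathbf{x})$ when $\mathbf{x} \sim \mathcal{N}(\mathbf{0}_{\ell}, I_{\ell})$ (the pushforward of the standard Gaussian on $\mathbb{R}^{\ell}$ under $f_i$). The function $f$ is said to localize an index $i^* \in \{1,\dots,\ell\}$ if $\mathbb{E}_{X \sim P_{f_{i^*}}}[X] \neq \mathbb{E}_{X \sim P_{f_j}}[X]$ for all $j \in \{1,\dots,\ell\} \setminus \{i^*\}$. *)

From HB Require Import structures.
From mathcomp Require Import all_boot all_order all_algebra.
From mathcomp Require Import all_classical all_reals all_analysis.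
Set Implicit Arguments. Unset Strict Implicit. Unset Printing Implicit Defensive.
Import Order.TTheory GRing.Theory Num.Theory.
Local Open Scope ring_scope.

Section CNN.
Variables (R : realType) (ell k : nat).

(* Positions are 0-based naturals; only positions 0 .. ell-1 are meaningful
   (positions >= ell are never read, thanks to the padding below). *)
Definition signal (c : nat) := 'I_c -> nat -> R.

Definition conv_layer (cin cout : nat) :=
  (('I_cout -> 'I_cin -> 'I_k -> R) * ('I_cout -> R))%type.

Definition pad (c : nat) (z : signal c) (ch : 'I_c) (m : nat) : R :=
  if (k./2 <= m)%N && (m - k./2 < ell)%N then z ch (m - k./2)%N else 0.

Definition conv (cin cout : nat) (L : conv_layer cin cout) (z : signal cin)
  : signal cout :=
  fun o p => L.2 o + \sum_(c < cin) \sum_(q < k) L.1 o c q * pad z c (p + q).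

Definition relu_sig (c : nat) (z : signal c) : signal c :=
  fun ch p => Num.max (z ch p) 0.

(* apply n hidden layers Cs 0, ..., Cs (n-1) (these are C_2, ..., C_{n+1}). *)
Fixpoint run_hidden (h : nat) (Cs : nat -> conv_layer h h) (n : nat)
  (z : signal h) : signal h :=
  match n with
  | 0 => z
  | n'.+1 => relu_sig (conv (Cs n') (run_hidden Cs n' z))
  end.

(* The depth-d normalization-free CNN:
   z1 = C_in x, z_i = relu (C_i z_{i-1}) for i = 2..d-1, f x = C_out z_{d-1}.
   Hidden layer C_i is [Cs (i-2)].  [cnn_coord ... x i] is f_i(x), i 1-based. *)
Definition cnn_coord (h d : nat) (Cin : conv_layer 1 h)
  (Cs : nat -> conv_layer h h) (Cout : conv_layer h 1)
  (x : ell.-tuple R) (i : nat) : R :=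
  let x0 : signal 1 := fun _ p => nth 0 x p in
  conv Cout (run_hidden Cs (d - 2) (conv Cin x0)) ord0 (i - 1)%N.

End CNN.

Local Open Scope ereal_scope.

(* Expectation of g(x) for x ~ N(0, I_n), as the iterated integral of g
   against n copies of the standard normal law on R (Fubini). *)
Fixpoint gauss_expect (R : realType) (n : nat)
  : (n.-tuple R -> R) -> \bar R :=
  match n return (n.-tuple R -> R) -> \bar R with
  | 0 => fun g => (g [tuple])%:E
  | n'.+1 => fun g =>
      \int[normal_prob 0 1]_(t in [set: R])
         gauss_expect (fun x : n'.-tuple R => g (cons_tuple t x))
  end.

From Pilot Require Import Defs.
From HB Require Import structures.
From mathcomp Require Import all_boot all_order all_algebra.
From mathcomp Require Import all_classical all_reals all_analysis.
From mathcomp Require Import zify.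

Set Implicit Arguments.
Unset Strict Implicit.
Unset Printing Implicit Defensive.
Import Order.TTheory GRing.Theory Num.Theory.
Local Open Scope ring_scope.

(** Each convolution widens the receptive field by [k./2] on either side, so
   away from the boundary the output coordinate [f_i] is one and the same
   function [F] of the input window of width [2 k./2 d + 1] centred at [i]:
   the network is translation equivariant there.  The coordinates of a
   standard Gaussian vector are i.i.d., so every window has the law of a
   standard Gaussian vector of that width, and [E f_i = E F = E f_(i+1)]. *)

Section ReceptiveField.
Variables (R : realType) (ell k : nat).

Definition window_eq c (w : nat) (z z' : signal R c) (a a' : nat) :=
  forall ch j, (j <= 2 * w)%N -> z ch (a + j)%N = z' ch (a' + j)%N.

Lemma conv_window_eq cin cout (L : conv_layer R k cin cout)
    (z z' : signal R cin) w a a' :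
  (a + 2 * (w + k./2) < ell)%N -> (a' + 2 * (w + k./2) < ell)%N ->
  window_eq (w + k./2) z z' a a' ->
  window_eq w (Defs.conv ell L z) (Defs.conv ell L z')
    (a + k./2) (a' + k./2).
Proof.
move=> ha ha' zz' o j hj; rewrite /Defs.conv; congr (_ + _).
apply: eq_bigr => c _; apply: eq_bigr => q _; congr (_ * _).
have hq : (q <= 2 * k./2)%N.
  by have := odd_double_half k; have := leq_b1 (odd k); have := ltn_ord q; lia.
rewrite /pad !ifT; try lia.
have -> : (a + k./2 + j + q - k./2 = a + (j + q))%N by lia.
have -> : (a' + k./2 + j + q - k./2 = a' + (j + q))%N by lia.
by apply: zz'; lia.
Qed.

Lemma relu_window_eq c (z z' : signal R c) w a a' :
  window_eq w z z' a a' -> window_eq w (relu_sig z) (relu_sig z') a a'.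
Proof. by move=> zz' ch j hj; rewrite /relu_sig zz'. Qed.

Lemma run_hidden_window_eq h (Cs : nat -> conv_layer R k h h) n
    (z z' : signal R h) w a a' :
  (a + 2 * (w + n * k./2) < ell)%N -> (a' + 2 * (w + n * k./2) < ell)%N ->
  window_eq (w + n * k./2) z z' a a' ->
  window_eq w (run_hidden ell Cs n z) (run_hidden ell Cs n z')
    (a + n * k./2) (a' + n * k./2).
Proof.
elim: n w => [|n IH] w ha ha' zz'.
  by move=> ch j hj; rewrite mul0n !addn0; apply: zz'; rewrite mul0n; lia.
have shift b : (b + n.+1 * k./2 = b + n * k./2 + k./2)%N by lia.
rewrite !shift; apply: relu_window_eq; apply: conv_window_eq; try lia.
apply: IH; try lia.
by rewrite -addnA -mulSn.
Qed.

Lemma cnn_coord_window_eq h d (Cin : conv_layer R k 1 h)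
    (Cs : nat -> conv_layer R k h h) (Cout : conv_layer R k h 1)
    (x x' : ell.-tuple R) a a' :
  (2 <= d)%N ->
  (a + 2 * (k./2 * d) < ell)%N -> (a' + 2 * (k./2 * d) < ell)%N ->
  (forall j, (j <= 2 * (k./2 * d))%N -> nth 0 x (a + j) = nth 0 x' (a' + j)) ->
  cnn_coord d Cin Cs Cout x (a + k./2 * d).+1 =
  cnn_coord d Cin Cs Cout x' (a' + k./2 * d).+1.
Proof.
case: d => [|[|n]] // _ ha ha' xx'; rewrite /cnn_coord !subSS !subn0.
have -> : (k./2 * n.+2 = k./2 + n * k./2 + k./2)%N by lia.
rewrite !addnA -(addn0 (a + _ + _ + _)%N) -(addn0 (a' + _ + _ + _)%N).
apply: (@conv_window_eq _ _ _ _ _ 0 _ _ _ _ _ ord0 0%N isT); try lia.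
apply: run_hidden_window_eq; try lia.
apply: conv_window_eq; try lia.
by move=> ch j hj; apply: xx'; lia.
Qed.

End ReceptiveField.

Section GaussianMarginals.
Variable R : realType.

Definition window n m a (x : n.-tuple R) : m.-tuple R :=
  [tuple nth 0 x (a + i) | i < m].

Lemma window_consS n m a t (x : n.-tuple R) :
  window m a.+1 (cons_tuple t x) = window m a x.
Proof. exact: eq_mktuple. Qed.

Lemma window_cons0 n m t (x : n.-tuple R) :
  window m.+1 0 (cons_tuple t x) = cons_tuple t (window m 0 x).
Proof.
apply: eq_from_tnth => i; rewrite tnth_mktuple.
case: (unliftP ord0 i) => [j ->|->]; last by rewrite tnth0.
by rewrite tnthS tnth_mktuple.
Qed.

Lemma integral_normal_prob_cst (c : \bar R) :
  (\int[normal_prob 0 1]_(t in [set: R]) c = c)%E.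
Proof. by rewrite integral_cst //= probability_setT mule1. Qed.

Lemma gauss_expect_cst n (c : R) :
  gauss_expect (fun _ : n.-tuple R => c) = c%:E.
Proof.
elim: n => [|n IH] //=.
by under eq_integral do rewrite IH; rewrite integral_normal_prob_cst.
Qed.

Lemma gauss_expect_window n m a (G : m.-tuple R -> R) : (a + m <= n)%N ->
  gauss_expect (fun x : n.-tuple R => G (window m a x)) = gauss_expect G.
Proof.
have window0 n' a' (G' : 0.-tuple R -> R) :
    gauss_expect (fun x : n'.-tuple R => G' (window 0 a' x)) = gauss_expect G'.
  have -> : (fun x : n'.-tuple R => G' (window 0 a' x)) = fun=> G' [tuple].
    by apply/funext => x; rewrite tuple0.
  by rewrite gauss_expect_cst.
elim: n a m G => [|n IH] a [|m] G amn; rewrite ?window0 //; first by lia.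
case: a amn => [|a] amn /=.
  congr (integral _ _ _); apply/funext => t.
  under eq_fun do rewrite window_cons0.
  exact: (IH 0%N m (fun y => G (cons_tuple t y))).
under eq_integral do under eq_fun do rewrite window_consS.
by under eq_integral do rewrite IH //; rewrite integral_normal_prob_cst.
Qed.

Lemma nth_window n m a (x : n.-tuple R) j : (j < m)%N ->
  nth 0 (window m a x) j = nth 0 x (a + j).
Proof. by move=> jm; rewrite -[j]/(val (Ordinal jm)) nth_mktuple. Qed.

Definition shift_tuple m n a (y : m.-tuple R) : n.-tuple R :=
  [tuple nth 0 (nseq a 0 ++ y) i | i < n].

Lemma nth_shift_tuple m n a (y : m.-tuple R) j : (a + j < n)%N ->
  nth 0 (shift_tuple n a y) (a + j) = nth 0 y j.
Proof.
move=> ajn; rewrite -[(a + j)%N]/(val (Ordinal ajn)) nth_mktuple /=.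
by rewrite nth_cat size_nseq ltnNge leq_addr addKn.
Qed.

End GaussianMarginals.

Theorem propositionC1 (R : realType) (ell d h k : nat)
  (k_odd : odd k) (d_ge2 : (2 <= d)%N)
  (Cin : conv_layer R k 1 h) (Cs : nat -> conv_layer R k h h)
  (Cout : conv_layer R k h 1)
  (hR : ((k./2 * d)%:R : R) < ell%:R / 2 - 2) :
  forall istar : nat, (k./2 * d + 1 <= istar <= ell - k./2 * d - 1)%N ->
    exists j : nat, [/\ (1 <= j <= ell)%N, j <> istar &
      gauss_expect (fun x => @cnn_coord R ell k h d Cin Cs Cout x istar)
      = gauss_expect (fun x => @cnn_coord R ell k h d Cin Cs Cout x j)].
Proof.
move=> istar /andP[lo hi]; exists istar.+1; split; [lia | lia |].
set D := (k./2 * d)%N in lo hi *.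
set a := (istar - 1 - D)%N.
pose F (y : (2 * D).+1.-tuple R) :=
  cnn_coord d Cin Cs Cout (shift_tuple ell a y) istar.
have expect_F b i : (b + 2 * D < ell)%N -> i = (b + D).+1 ->
    gauss_expect (fun x : ell.-tuple R => cnn_coord d Cin Cs Cout x i) =
    gauss_expect F.
  move=> bD ->; rewrite -[RHS](@gauss_expect_window _ ell _ b); last by lia.
  suff -> : (fun x : ell.-tuple R => cnn_coord d Cin Cs Cout x (b + D).+1) =
            (fun x => F (window _ b x)) by [].
  apply/funext => x; rewrite /F (_ : istar = (a + D).+1); last by lia.
  apply: cnn_coord_window_eq => //; try lia.
  by move=> j jD; rewrite nth_shift_tuple ?nth_window //; lia.
by rewrite (expect_F a istar) ?(expect_F a.+1 istar.+1) //; lia.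
Qed.
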